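(* Let $n\ge2$ and $\Delta\subset B_n$ a proper ideal. Then for $0\le i\le n-1$, $$h_i(\mathrm{Bier}(B_n,\Delta))=\#\{(A;x) \text{ facet of } \mathrm{Bier}(B_n,\Delta) : |A\cap(x,n]|+|[1,x)\setminus A|=i\}.$$ Equivalently (reversing the order of the ground set), $h_i(\mathrm{Bier}(B_n,\Delta))=\#\{(A;x): |A\cap[1,x)|+|(x,n]\setminus A|=i\}$.
   Context: $B_n$ is the Boolean lattice of subsets of $[1,n]=\{1,\dots,n\}$; $(x,n]=\{x+1,\dots,n\}$, $[1,x)=\{1,\dots,x-1\}$. A proper ideal $\Delta\subset B_n$ is a nonempty family of subsets of $[1,n]$ closed under taking subsets with $[1,n]\notin\Delta$. The Bier sphere $\mathrm{Bier}(B_n,\Delta)$ is the simplicial complex whose faces are the pairs $(B,C)$ with $B\subsetneq C\subseteq[1,n]$, $B\in\Delta$, $C\notin\Delta$, with $(B',C')$ a face of $(B,C)$ iff $B'\subseteq B$ and $C\subseteq C'$; the face $(B,C)$ has $|B|+n-|C|$ vertices (the empty face is $(\emptyset,[1,n])$). Its facets are $(A;x):=(A,A\cup\{x\})$ with $A\in\Delta$, $x\notin A$, $A\cup\{x\}\notin\Delta$, each with $n-1$ vertices. For a simplicial complex $\Gamma$ all of whose facets have $n-1$ vertices, $f_j(\Gamma)$ is the number of faces with $j$ vertices ($f_0=1$) and $h_i(\Gamma):=\sum_{j=0}^{n-1}(-1)^{i+j}\binom{n-1-j}{n-1-i}f_j(\Gamma)$ for $0\le i\le n-1$, $h_i:=0$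 otherwise. *)

(* Ground set [1,n] is modelled by 'I_n (element k : 'I_n
   stands for k+1); the order is preserved, so (x,n] = [set y : 'I_n | x < y] and
   [1,x) = [set y : 'I_n | y < x]. *)
From mathcomp Require Import all_boot all_order all_algebra.
Set Implicit Arguments. Unset Strict Implicit. Unset Printing Implicit Defensive.
Import GRing.Theory Num.Theory.

Definition Bn_proper_ideal (n : nat) (D : {set {set 'I_n}}) : Prop :=
  [/\ D != set0,
      (forall B C : {set 'I_n}, C \in D -> B \subset C -> B \in D)
    & [set: 'I_n] \notin D].

Definition bier_face (n : nat) (D : {set {set 'I_n}}) (BC : {set 'I_n} * {set 'I_n}) : bool :=
  [&& BC.1 \proper BC.2, BC.1 \in D & BC.2 \notin D].

Definition face_nvert (n : nat) (BC : {set 'I_n} * {set 'I_n}) : nat :=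
  #|BC.1| + n - #|BC.2|.

Definition bier_f (n : nat) (D : {set {set 'I_n}}) (j : nat) : nat :=
  #|[set BC | bier_face D BC & face_nvert BC == j]|.

Definition bier_h (n : nat) (D : {set {set 'I_n}}) (i : nat) : int :=
  (\sum_(j < n) (-1) ^+ (i + j) * ('C(n.-1 - j, n.-1 - i))%:Z * (bier_f D j)%:Z)%R.

(* facets (A;x) = (A, A u {x}) *)
Definition bier_facet (n : nat) (D : {set {set 'I_n}}) (Ax : {set 'I_n} * 'I_n) : bool :=
  [&& Ax.1 \in D, Ax.2 \notin Ax.1 & (Ax.2 |: Ax.1) \notin D].

Definition stat1 (n : nat) (Ax : {set 'I_n} * 'I_n) : nat :=
  #|Ax.1 :&: [set y : 'I_n | Ax.2 < y]| + #|[set y : 'I_n | y < Ax.2] :\: Ax.1|.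

Definition stat2 (n : nat) (Ax : {set 'I_n} * 'I_n) : nat :=
  #|Ax.1 :&: [set y : 'I_n | y < Ax.2]| + #|[set y : 'I_n | Ax.2 < y] :\: Ax.1|.

(* Fix any total order on the ground set, given by an injective rank.  The
   faces of the Bier sphere are partitioned into Boolean intervals, one for each
   facet F = (A;x): a face (B,C) is assigned to the facet whose x is the element
   of C \ B of largest rank with B u (C n [1,x)) in Delta, and A is that set.
   The interval of F consists of the faces (A \ S, A u {x} u S'), where S u S'
   ranges over the subsets of the free set U(F) = (A n [1,x)) u ((x,n] \ A),
   S below and S' above x; such a face has n-1-|S u S'| vertices.  Hence
   f_j = sum_F C(|U(F)|, n-1-j), and binomial inversion gives
   h_i = #{F | |U(F)| = n-1-i}.  As |U(F)| + |A n (x,n]| + |[1,x) \ A| = n-1,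
   this is the first formula; the second is the first for the reversed order. *)

From mathcomp Require Import all_boot all_order all_algebra.
From mathcomp Require Import zify ring.
Set Implicit Arguments. Unset Strict Implicit.
Import GRing.Theory.

Section AlternatingBinomialSums.
Local Open Scope ring_scope.

Lemma mul_bin_bin (u k m : nat) : (m <= k <= u)%N ->
  ('C(u, k) * 'C(k, m) = 'C(u, m) * 'C(u - m, k - m))%N.
Proof.
move=> /andP[mk ku]; have mu := leq_trans mk ku.
have facts_gt0 : (0 < m`! * (k - m)`! * (u - k)`!)%N by rewrite !muln_gt0 !fact_gt0.
apply/eqP; rewrite -(eqn_pmul2r facts_gt0); apply/eqP.
have -> : ('C(u, k) * 'C(k, m) * (m`! * (k - m)`! * (u - k)`!)
          = 'C(u, k) * ('C(k, m) * (m`! * (k - m)`!)) * (u - k)`!)%N by ring.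
have -> : ('C(u, m) * 'C(u - m, k - m) * (m`! * (k - m)`! * (u - k)`!)
          = 'C(u, m) * (m`! * ('C(u - m, k - m) * ((k - m)`! * ((u - m) - (k - m))`!))))%N.
  by rewrite (_ : (u - m - (k - m) = u - k)%N); [ring | lia].
rewrite !bin_fact ?leq_sub2r // -mulnA bin_fact //.
Qed.

Lemma signr_oddE (a b : nat) : odd a = odd b -> (-1) ^+ a = (-1) ^+ b :> int.
Proof. by move=> odd_ab; rewrite -signr_odd odd_ab signr_odd. Qed.

Lemma sum_sign_bin (N : nat) :
  \sum_(t < N.+1) (-1) ^+ t * 'C(N, t)%:R = (N == 0)%N%:R :> int.
Proof.
have := exprBn (1 : int) 1 N; rewrite subrr expr0n => ->.
by apply: eq_bigr => t _; rewrite !expr1n !mulr1 mulr_natr.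
Qed.

Lemma sum_sign_bin_bin (N u m : nat) : (u < N)%N ->
  \sum_(k < N) (-1) ^+ (k + m)%N * ('C(u, k) * 'C(k, m))%N%:R = (u == m)%:R :> int.
Proof.
move=> uN.
rewrite -(big_mkord xpredT (fun k => (-1) ^+ (k + m)%N * ('C(u, k) * 'C(k, m))%N%:R)).
rewrite (big_cat_nat _ (n := u.+1)) //=.
rewrite [X in _ + X]big1_seq ?addr0; last first.
  move=> k /andP[_]; rewrite mem_index_iota => /andP[uk _].
  by rewrite (bin_small uk) mul0n mulr0n mulr0.
have [um | mu] := ltnP u m.
  rewrite big1_seq ?(ltn_eqF um) // => k /andP[_]; rewrite mem_index_iota => /andP[_ ku].
  by rewrite (@bin_small k) ?muln0 ?mulr0n ?mulr0 //; apply: leq_trans ku um.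
rewrite (big_cat_nat _ (n := m)) ?(leqW mu) //= big1_seq ?add0r; last first.
  move=> k /andP[_]; rewrite mem_index_iota => /andP[_ km].
  by rewrite (bin_small km) muln0 mulr0n mulr0.
rewrite -{1}(add0n m) big_addn subSn // big_mkord.
transitivity ('C(u, m)%:R * \sum_(t < (u - m).+1) (-1) ^+ t * 'C(u - m, t)%:R :> int).
  rewrite mulr_sumr; apply: eq_bigr => t _.
  have tm_le_u : (m <= t + m <= u)%N by have := ltn_ord t; lia.
  rewrite mul_bin_bin // addnK natrM mulrCA (@signr_oddE (t + m + m) t) //; lia.
rewrite sum_sign_bin.
have [<- | ne] := eqVneq u m; first by rewrite binn subnn eqxx mul1r.
by rewrite subn_eq0 leqNgt ltn_neqAle eq_sym ne mu mulr0.
Qed.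

Lemma h_transform_bin (n i u : nat) : (i <= n.-1)%N -> (u < n)%N ->
  \sum_(j < n) (-1) ^+ (i + j) * ('C(n.-1 - j, n.-1 - i))%:Z * ('C(u, n.-1 - j))%:Z
    = (u == n.-1 - i)%N%:R.
Proof.
move=> le_i lt_un.
rewrite -(sum_sign_bin_bin (n.-1 - i) lt_un) (reindex_inj rev_ord_inj) /=.
apply: eq_bigr => j _; have lt_jn := ltn_ord j.
rewrite (_ : (n.-1 - (n - j.+1) = j)%N); last by lia.
rewrite mulrAC -mulrA -PoszM mulnC natz; congr (_ * _).
by apply: signr_oddE; lia.
Qed.

End AlternatingBinomialSums.

Section IntervalPartition.

Variables (n : nat) (D : {set {set 'I_n}}).
Hypothesis D_down : forall B C : {set 'I_n}, C \in D -> B \subset C -> B \in D.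
Variable rk : 'I_n -> nat.
Hypothesis rk_inj : injective rk.

Definition below (x : 'I_n) := [set y | rk y < rk x].
Definition above (x : 'I_n) := [set y | rk x < rk y].

Variant rank_cmp_spec (x y : 'I_n) : bool -> bool -> bool -> Prop :=
  | RankEq of y = x : rank_cmp_spec x y true false false
  | RankBelow : rank_cmp_spec x y false true false
  | RankAbove : rank_cmp_spec x y false false true.

Lemma rank_cmpP x y : rank_cmp_spec x y (y == x) (rk y < rk x) (rk x < rk y).
Proof.
have [-> | yx] := eqVneq y x; first by rewrite ltnn; constructor.
case: ltngtP => [||/rk_inj eq_yx]; try constructor.
by rewrite eq_yx eqxx in yx.
Qed.

Ltac rank_cases x y :=
  case: (rank_cmpP x y) => [->||] /=;
  by repeat match goal with |- context [?a \in ?X] => case: (a \in X) end.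

Lemma card_below_above x : #|below x| + #|above x| = n.-1.
Proof.
have below_above_disj : below x :&: above x = set0.
  by apply/setP => y; rewrite !inE; case: (rank_cmpP x y).
have below_above_setC1 : below x :|: above x = [set~ x].
  by apply/setP => y; rewrite !inE; case: (rank_cmpP x y).
by rewrite -cardsUI below_above_disj cards0 addn0 below_above_setC1 cardsC1 card_ord.
Qed.

Definition facet_stat (F : {set 'I_n} * 'I_n) :=
  #|F.1 :&: above F.2| + #|below F.2 :\: F.1|.

Definition free_set (F : {set 'I_n} * 'I_n) :=
  (F.1 :&: below F.2) :|: (above F.2 :\: F.1).

Lemma card_free_set F : #|free_set F| + facet_stat F = n.-1.
Proof.
case: F => A x; rewrite /free_set /facet_stat /= -(card_below_above x).
rewrite cardsU (_ : A :&: below x :&: (above x :\: A) = set0) ?cards0 ?subn0; last first.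
  by apply/setP => y; rewrite !inE; case: (y \in A); rewrite ?andbF.
rewrite -(cardsID A (below x)) -(cardsID A (above x)) ![_ :&: A]setIC; ring.
Qed.

Definition in_interval (F : {set 'I_n} * 'I_n) (G : {set 'I_n} * {set 'I_n}) :=
  (F.2 \in G.2 :\: G.1) && (F.1 == G.1 :|: (G.2 :&: below F.2)).

Lemma in_interval_rank F F' G :
    bier_facet D F' -> in_interval F G -> in_interval F' G -> rk F.2 < rk F'.2 ->
  F.2 |: F.1 \in D.
Proof.
case: F => A x; case: F' => A' x'; case: G => B C; rewrite /in_interval /=.
move=> /and3P[A'D _ _] /andP[xCB /eqP ->] /andP[_ /eqP eqA'] lt_x_x'.
apply: (D_down A'D); apply/subsetP => y; rewrite eqA' !inE.
move: xCB; rewrite inE => /andP[_ xC].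
case/orP=> [/eqP -> | /orP[-> // | /andP[yC lt_y_x]]]; first by rewrite xC lt_x_x' orbT.
by rewrite yC (ltn_trans lt_y_x lt_x_x') orbT.
Qed.

Lemma in_interval_uniq F F' G : bier_facet D F -> bier_facet D F' ->
  in_interval F G -> in_interval F' G -> F = F'.
Proof.
move=> facetF facetF' intF intF'.
have not_facet F1 : bier_facet D F1 -> F1.2 |: F1.1 \in D -> False.
  by case/and3P=> _ _ /negP.
case: (ltngtP (rk F.2) (rk F'.2)) => [lt | lt | /rk_inj eq_x].
- by case: (not_facet _ facetF (in_interval_rank facetF' intF intF' lt)).
- by case: (not_facet _ facetF' (in_interval_rank facetF intF' intF lt)).
move: intF intF'; case: F {facetF} eq_x => A x; case: F' {facetF'} => A' x' /= <-.
rewrite /in_interval /=.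
by case/andP=> _ /eqP -> /andP[_ /eqP ->].
Qed.

Definition interval_face (F : {set 'I_n} * 'I_n) (S : {set 'I_n}) :=
  (F.1 :\: (S :&: below F.2), (F.2 |: F.1) :|: (S :&: above F.2)).

Definition interval_coord (F : {set 'I_n} * 'I_n) (G : {set 'I_n} * {set 'I_n}) :=
  (F.1 :\: G.1) :|: (G.2 :\: (F.2 |: F.1)).

Lemma interval_face_in_interval (F : {set 'I_n} * 'I_n) (S : {set 'I_n}) :
  F.2 \notin F.1 -> S \subset free_set F -> in_interval F (interval_face F S).
Proof.
case: F => A x /= xA sub_S; rewrite /in_interval /= !inE eqxx (negbTE xA) andbF /=.
apply/eqP/setP => y; move: xA; move/implyP: (subsetP sub_S y).
by rewrite !inE; rank_cases x y.
Qed.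

Lemma interval_coordK (F : {set 'I_n} * 'I_n) (S : {set 'I_n}) :
  F.2 \notin F.1 -> S \subset free_set F -> interval_coord F (interval_face F S) = S.
Proof.
case: F => A x /= xA sub_S; apply/setP => y.
move: xA; move/implyP: (subsetP sub_S y); rewrite !inE; rank_cases x y.
Qed.

Lemma interval_coord_sub F G : bier_face D G -> in_interval F G ->
  interval_coord F G \subset free_set F.
Proof.
case: F => A x; case: G => B C /and3P[/proper_sub sub_BC _ _].
rewrite /in_interval inE /= => /andP[/andP[xB xC] /eqP ->].
apply/subsetP => y; move: xB xC; move/implyP: (subsetP sub_BC y).
by rewrite !inE; rank_cases x y.
Qed.

Lemma interval_faceK F G : bier_face D G -> in_interval F G ->
  interval_face F (interval_coord F G) = G.
Proof.
case: F => A x; case: G => B C /and3P[/proper_sub sub_BC _ _].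
rewrite /in_interval inE /= => /andP[/andP[xB xC] /eqP ->].
congr pair; apply/setP => y; move: xB xC; move/implyP: (subsetP sub_BC y);
  by rewrite !inE; rank_cases x y.
Qed.

Lemma interval_face_is_face (F : {set 'I_n} * 'I_n) (S : {set 'I_n}) :
  bier_facet D F -> bier_face D (interval_face F S).
Proof.
case: F => A x /and3P[AD xA xAD]; apply/and3P; split => /=.
- apply/properP; split.
    by apply/subsetP => y; rewrite !inE => /andP[_ ->]; rewrite orbT.
  by exists x; rewrite !inE ?eqxx // (negbTE xA) andbF.
- exact: D_down AD (subsetDl _ _).
- by apply: contra xAD => CD; apply: D_down CD (subsetUl _ _).
Qed.

Lemma face_nvert_interval_face (F : {set 'I_n} * 'I_n) (S : {set 'I_n}) :
  F.2 \notin F.1 -> S \subset free_set F -> face_nvert (interval_face F S) = n.-1 - #|S|.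
Proof.
case: F => A x /= xA sub_S; rewrite /face_nvert /=.
have in_free y : (y \in S) ==> (y \in free_set (A, x)) by apply/implyP/(subsetP sub_S).
have S_below_sub : S :&: below x \subset A.
  apply/subsetP => y; apply/implyP.
  by move: (in_free y); rewrite !inE; rank_cases x y.
have card_B : #|A :\: (S :&: below x)| = #|A| - #|S :&: below x|.
  by rewrite cardsD (setIidPr S_below_sub).
have card_C : #|x |: A :|: S :&: above x| = #|A|.+1 + #|S :&: above x|.
  rewrite cardsU cardsU1 xA (_ : (x |: A) :&: (S :&: above x) = set0) ?cards0 ?subn0 //.
  by apply/setP => y; move: xA (in_free y); rewrite !inE; rank_cases x y.
have card_S : #|S| = #|S :&: below x| + #|S :&: above x|.
  rewrite -(cardsID (below x) S) (_ : S :\: below x = S :&: above x) //.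
  by apply/setP => y; move: xA (in_free y); rewrite !inE; rank_cases x y.
have := max_card (x |: A :|: S :&: above x); rewrite card_ord card_C card_B card_S.
have := subset_leq_card S_below_sub.
set a := #|A|; set sb := #|S :&: below x|; set sa := #|S :&: above x|; lia.
Qed.

Definition lower_part (B C : {set 'I_n}) (y : 'I_n) := B :|: (C :&: below y).

Lemma lower_part_min (B C : {set 'I_n}) (y : 'I_n) :
  (forall z, z \in C :\: B -> rk y <= rk z) -> lower_part B C y = B.
Proof.
move=> y_min; apply/setP => z; rewrite !inE.
case: (boolP (z \in B)) => //= zB; apply/negbTE; apply/negP => /andP[zC lt_zy].
by have := y_min z; rewrite !inE zB zC leqNgt lt_zy => /(_ isT).
Qed.

Lemma lower_part_next (B C : {set 'I_n}) (x z : 'I_n) : rk x < rk z ->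
    (forall y, y \in C :\: B -> rk x < rk y -> rk z <= rk y) ->
  lower_part B C z \subset x |: lower_part B C x.
Proof.
move=> lt_xz z_next; apply/subsetP => y; rewrite !inE.
case: (boolP (y \in B)) => [_ | yB]; rewrite ?orbT //= => /andP[yC lt_yz].
move: (z_next y); rewrite !inE yB yC [rk z <= _]leqNgt lt_yz => /(_ isT) /implyP.
by case: (rank_cmpP x y); rewrite ?yC.
Qed.

Lemma lower_part_last (B C : {set 'I_n}) (x : 'I_n) : B \subset C ->
    (forall y, y \in C :\: B -> rk y <= rk x) ->
  C \subset x |: lower_part B C x.
Proof.
move=> sub_BC x_last; apply/subsetP => y yC; rewrite !inE yC /=.
case: (boolP (y \in B)) => [_ | yB]; rewrite ?orbT //=.
move: (x_last y); rewrite !inE yB yC leqNgt => /(_ isT).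
by case: (rank_cmpP x y).
Qed.

(* The facet of a face (B,C): x is the element of C \ B of largest rank whose
   lower part is in D; the next element of C \ B above x, or C itself if there is
   none, shows that x |: lower_part B C x is not in D. *)
Lemma exists_in_interval (G : {set 'I_n} * {set 'I_n}) :
  bier_face D G -> exists2 F, bier_facet D F & in_interval F G.
Proof.
case: G => B C /and3P[/= /properP[sub_BC [y0 y0C y0B]] BD CD].
have y0CB : y0 \in C :\: B by rewrite inE y0B y0C.
pose P y := (y \in C :\: B) && (lower_part B C y \in D).
have [y1 Py1] : exists y, P y.
  case: (@arg_minnP _ y0 (fun y => y \in C :\: B) rk y0CB) => y1 y1CB y1_min.
  by exists y1; rewrite /P y1CB lower_part_min.
case: (arg_maxnP rk Py1) => x /andP[xCB xD] x_max.
exists (lower_part B C x, x); last by rewrite /in_interval /= xCB eqxx.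
have xL : x \notin lower_part B C x.
  by move: xCB; rewrite !inE ltnn andbF orbF => /andP[].
rewrite /bier_facet /= xD xL /=; apply/negP => xLD.
case: (pickP [pred z | (z \in C :\: B) && (rk x < rk z)]) => [z0 z0_above | none_above].
  case: (arg_minnP rk z0_above) => z /andP[zCB lt_xz] z_min.
  have Pz : P z.
    rewrite /P zCB (D_down xLD) // lower_part_next // => y yCB lt_xy.
    by apply: z_min; rewrite /= yCB.
  by have := x_max z Pz; rewrite /= leqNgt lt_xz.
move/negP: CD; apply; apply: (D_down xLD); apply: lower_part_last => // y yCB.
by rewrite leqNgt; have := none_above y; rewrite /= yCB /= => ->.
Qed.

Lemma facet_notin (F : {set 'I_n} * 'I_n) : bier_facet D F -> F.2 \notin F.1.
Proof. by case/and3P. Qed.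

Definition interval_pairs (k : nat) :=
  [set p : ({set 'I_n} * 'I_n) * {set 'I_n} |
    [&& bier_facet D p.1, p.2 \subset free_set p.1 & #|p.2| == k]].

Lemma card_interval_pairs k :
  #|interval_pairs k| = \sum_(F | bier_facet D F) 'C(#|free_set F|, k).
Proof.
rewrite -sum1dep_card -(pair_big_dep (bier_facet D)
  (fun F (S : {set 'I_n}) => (S \subset free_set F) && (#|S| == k)) (fun _ _ => 1)) /=.
by apply: eq_bigr => F _; rewrite sum1dep_card cards_draws.
Qed.

Lemma interval_face_inj k :
  {in interval_pairs k &, injective (fun p => interval_face p.1 p.2)}.
Proof.
move=> [F S] [F' S']; rewrite !inE /=.
move=> /and3P[facetF sub_S _] /and3P[facetF' sub_S' _] eqG.
have eqF : F = F'.
  apply: (in_interval_uniq facetF facetF'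
    (interval_face_in_interval (facet_notin facetF) sub_S)).
  by rewrite eqG; apply: interval_face_in_interval (facet_notin facetF') sub_S'.
rewrite -eqF in facetF' sub_S' eqG *.
by rewrite -(interval_coordK (facet_notin facetF) sub_S) eqG interval_coordK ?facet_notin.
Qed.

Lemma faces_nvert_interval_pairs j : j < n ->
  [set G | bier_face D G & face_nvert G == j]
    = (fun p => interval_face p.1 p.2) @: interval_pairs (n.-1 - j).
Proof.
move=> lt_jn; apply/setP => G; rewrite inE; apply/andP/imsetP.
- case=> faceG /eqP nvertG; have [F facetF intFG] := exists_in_interval faceG.
  have sub_S := interval_coord_sub faceG intFG.
  exists (F, interval_coord F G); last by rewrite /= interval_faceK.
  rewrite inE /= facetF sub_S /=.
  have := face_nvert_interval_face (facet_notin facetF) sub_S.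
  rewrite interval_faceK // nvertG => ->.
  have := subset_leq_card sub_S; have := card_free_set F.
  set s := #|interval_coord F G|; set u := #|free_set F|; move=> ? ?; apply/eqP; lia.
- case=> -[F S]; rewrite inE /= => /and3P[facetF sub_S /eqP card_S] ->.
  split; first exact: interval_face_is_face.
  by rewrite face_nvert_interval_face ?facet_notin // card_S; apply/eqP; lia.
Qed.

Lemma bier_f_free_sets j : j < n ->
  bier_f D j = \sum_(F | bier_facet D F) 'C(#|free_set F|, n.-1 - j).
Proof.
move=> lt_jn; rewrite /bier_f faces_nvert_interval_pairs // card_in_imset.
  exact: card_interval_pairs.
exact: interval_face_inj.
Qed.

Local Open Scope ring_scope.

Lemma bier_h_facet_stat i : (i <= n.-1)%N ->
  bier_h D i = (#|[set F | bier_facet D F & facet_stat F == i]|%N)%:Z.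
Proof.
move=> le_i; rewrite /bier_h.
under eq_bigr => j _ do
  rewrite bier_f_free_sets // -[Posz (\sum_(F | _) _)]natz natr_sum mulr_sumr.
rewrite exchange_big /= -sum1dep_card -[Posz (\sum_(F | _) 1)]natz natr_sum.
rewrite [RHS]big_mkcondr /=.
apply: eq_bigr => F _; under eq_bigr => j _ do rewrite natz.
have := card_free_set F; have := ltn_ord F.2.
set u := #|free_set F|; set s := facet_stat F => lt_x_n card_free.
rewrite h_transform_bin //; last by lia.
have -> : (u == n.-1 - i)%N = (s == i) by apply/eqP/eqP; lia.
by case: (s == i).
Qed.

End IntervalPartition.

Local Open Scope ring_scope.

Theorem mainTheorem9 (n : nat) (D : {set {set 'I_n}}) :
  (1 < n)%N -> Bn_proper_ideal D ->
  forall i : nat, (i <= n.-1)%N ->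
    bier_h D i = (#|[set Ax | bier_facet D Ax & stat1 Ax == i]|%N)%:Z /\
    bier_h D i = (#|[set Ax | bier_facet D Ax & stat2 Ax == i]|%N)%:Z.
Proof.
move=> _ [_ D_down _] i le_i; split.
  exact: (bier_h_facet_stat D_down (@ord_inj n)).
pose rev_rk (y : 'I_n) : nat := rev_ord y.
have rev_rk_inj : injective rev_rk by move=> y z /val_inj /rev_ord_inj.
have below_rev x : below rev_rk x = [set y : 'I_n | (x < y)%N].
  by apply/setP => y; rewrite !inE /rev_rk /=; have := ltn_ord x; have := ltn_ord y; lia.
have above_rev x : above rev_rk x = [set y : 'I_n | (y < x)%N].
  by apply/setP => y; rewrite !inE /rev_rk /=; have := ltn_ord x; have := ltn_ord y; lia.
rewrite (bier_h_facet_stat D_down rev_rk_inj le_i); congr (Posz _); apply: eq_card => F.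
by rewrite !inE /facet_stat below_rev above_rev.
Qed.
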